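(* Let $G$ be a connected graph. The interval function $I_G$ satisfies the axioms $(J0')$ and $(br)$ if and only if $G$ is a bridged graph.
   Context: Graphs are finite, simple and connected; $d$ is the shortest-path distance and $I_G(u,v)=\{w: d(u,w)+d(w,v)=d(u,v)\}$. A graph is bridged if it has no isometric cycle of length greater than $3$. For a map $R:V\times V\to 2^V$: $(J0')$: for pairwise distinct $u,x,y,v$, if $x\in R(u,y)$, $y\in R(x,v)$ and $R(u,y)\cap R(x,v)\subseteq\{u,x,y,v\}$ then $x\in R(u,v)$. $(br)$: for any $u,v,x,y,z$, if $R(x,y)=\{x,y\}$, $R(x,u)=\{x,u\}$, $R(v,y)=\{v,y\}$ and $z\in R(u,v)$, then $R(x,z)=\{x,z\}$ or $R(y,z)=\{y,z\}$. *)

(* Finite simple connected graphs as a symmetric irreflexive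
   relation on a finType. *)
From mathcomp Require Import all_boot.
Set Implicit Arguments. Unset Strict Implicit. Unset Printing Implicit Defensive.

Section Graph.
Variables (T : finType) (e : rel T).

Definition walkn (n : nat) (x y : T) : bool :=
  [exists p : n.-tuple T, path e x p && (last x p == y)].

(* shortest-path distance: least n (< #|T|) with a walk of length n;
   correct for connected graphs (where d(x,y) < #|T|). *)
Definition dist (x y : T) : nat := find (fun n => walkn n x y) (iota 0 #|T|).

Definition connected_graph : Prop := forall x y : T, connect e x y.

Definition interval (u v : T) : {set T} :=
  [set w | dist u w + dist w v == dist u v].

(* isometric cycle of length k: distinct vertices s_0..s_{k-1}, k >= 3,
   cyclically consecutive vertices adjacent, and graph distance equals
   distance along the cycle *)
Definition isometric_cycle (s : seq T) : Prop :=
  [/\ 3 <= size s, uniq s, cycle e s &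
     forall (x0 : T) (i j : nat), i < size s -> j < size s ->
       dist (nth x0 s i) (nth x0 s j) =
       minn ((j - i) + (i - j)) (size s - ((j - i) + (i - j)))].

Definition bridged : Prop :=
  forall s : seq T, isometric_cycle s -> size s <= 3.

End Graph.

Section Conds.
Variables (T : finType) (R : T -> T -> {set T}).

Definition cond_J0' : Prop :=
  forall u x y v : T,
    uniq [:: u; x; y; v] ->
    x \in R u y -> y \in R x v ->
    R u y :&: R x v \subset [set u; x; y; v] ->
    x \in R u v.

Definition cond_br : Prop :=
  forall u v x y z : T,
    R x y = [set x; y] -> R x u = [set x; u] -> R v y = [set v; y] ->
    z \in R u v ->
    R x z = [set x; z] \/ R y z = [set y; z].
End Conds.

From mathcomp Require Import all_boot zify.
Set Implicit Arguments. Unset Strict Implicit. Unset Printing Implicit Defensive.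

(* Both sides are equivalent to two conditions on the distance levels from an
   arbitrary vertex u, for every k:
   - triangle condition: adjacent a, b with d(u,a) = d(u,b) = k > 0 have a
     common neighbour at distance k - 1 from u;
   - lower clique: the neighbours at distance k of a vertex at distance k + 1
     are pairwise adjacent.
   From (J0') and (br) both follow by induction on k, and they forbid isometric
   cycles of length 4 and of length at least 6 (look at the vertices opposite
   to u); the pentagon violates (br) directly.  Conversely, in a bridged graph
   the first failure of either condition, at level k, spans together with
   geodesics from u an isometric cycle of length 2k + 1 or 2k + 2.  Given both
   conditions, an edge xy with x closer to u and y closer to v that does not lie
   on a geodesic from u to v spans a triangle xyw with d(u,w) = d(u,x) and
   d(v,w) = d(v,y); this gives (J0'), while (br) comes down to the lower clique
   condition at levels 1 and 2 and the absence of isometric pentagons. *)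

(* lia overflows the stack on the hypotheses about vertices that accumulate in
   these proofs, so only the arithmetic ones are kept. *)
Ltac clear_non_arith := repeat match goal with
  | H : is_true ?b |- _ =>
      lazymatch b with
      | (_ <= _)%N => fail
      | (?x == _) => lazymatch type of x with nat => fail | _ => clear H end
      | ~~ (?x == _) => lazymatch type of x with nat => fail | _ => clear H end
      | _ => clear H
      end
  | H : ?x = _ |- _ => lazymatch type of x with nat => fail | _ => clear H end
  end.
Ltac nat_lia := clear_non_arith; lia.

Section Distances.
Variables (T : finType) (e : rel T).
Hypotheses (e_sym : symmetric e) (e_irr : irreflexive e) (e_conn : connected_graph e).
Local Notation d := (dist e).

Definition has_walk n x y :=
  exists p : seq T, [/\ size p = n, path e x p & last x p = y].

Lemma walknP n x y : reflect (has_walk n x y) (walkn e n x y).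
Proof.
apply: (iffP existsP) => [[t /andP[hp /eqP hl]] | [p [hs hp hl]]].
  by exists (val t); rewrite size_tuple.
have hs' : size p == n by apply/eqP.
by exists (Tuple hs'); rewrite /= hp hl eqxx.
Qed.

Lemma has_walk_shorten n x y :
  has_walk n x y -> exists m, [/\ m < #|T|, m <= n & has_walk m x y].
Proof.
case=> p [hs hp hl]; case: (shortenP hp) hl => p' hp' hu hsub hl.
exists (size p'); split => //; last by exists p'.
  have /card_uniqP hc := hu.
  by have := max_card (mem (x :: p')); rewrite hc.
rewrite -hs; apply: uniq_leq_size; first by case/andP: hu.
by move=> z hz; apply: hsub.
Qed.

Lemma dist_le_walk n x y : has_walk n x y -> d x y <= n.
Proof.
case/has_walk_shorten=> m [hm hmn hw]; apply: leq_trans hmn.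
rewrite leqNgt; apply/negP => hlt.
have := before_find 0 hlt; rewrite nth_iota // add0n.
by move/walknP: hw => ->.
Qed.

Lemma has_walk_dist x y : has_walk (d x y) x y.
Proof.
have [p hp hl] := connectP (e_conn x y).
have [m [hm _ hw]] : exists m, [/\ m < #|T|, m <= size p & has_walk m x y].
  by apply: has_walk_shorten; exists p.
have hh : has (fun n => walkn e n x y) (iota 0 #|T|).
  by apply/hasP; exists m; [rewrite mem_iota | apply/walknP].
have := nth_find 0 hh; rewrite nth_iota; last by move: hh; rewrite has_find size_iota.
by rewrite add0n => /walknP.
Qed.

Lemma has_walk0 x y : has_walk 0 x y <-> x = y.
Proof.
split=> [[p [hs hp hl]] | ->]; last by exists [::].
by case: p hs hp hl => [|//] _ _ <-.
Qed.

Lemma has_walkS n x y : has_walk n.+1 x y <-> exists2 z, e x z & has_walk n z y.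
Proof.
split=> [[[|z p] [//= [hs] /andP[hz hp] hl]] | [z hz [p [hs hp hl]]]].
  by exists z => //; exists p.
by exists (z :: p); rewrite /= hs hz hp.
Qed.

Lemma has_walk_cat m n x y z : has_walk m x y -> has_walk n y z -> has_walk (m + n) x z.
Proof.
elim: m x => [|m IH] x; first by move/has_walk0 => ->.
by case/has_walkS=> w hw hW hn; apply/has_walkS; exists w => //; apply: IH hn.
Qed.

Lemma has_walk_sym n x y : has_walk n x y -> has_walk n y x.
Proof.
elim: n x y => [|n IH] x y; first by move/has_walk0 => ->; apply/has_walk0.
case/has_walkS=> z hz /IH hW; rewrite -addn1; apply: has_walk_cat hW _.
by apply/has_walkS; exists x; rewrite 1?e_sym //; apply/has_walk0.
Qed.

Lemma distC x y : d x y = d y x.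
Proof.
by apply/eqP; rewrite eqn_leq !dist_le_walk //; apply: has_walk_sym; apply: has_walk_dist.
Qed.

Lemma distxx x : d x x = 0.
Proof. by apply/eqP; rewrite -leqn0 dist_le_walk //; apply/has_walk0. Qed.

Lemma dist0_eq x y : d x y = 0 -> x = y.
Proof. by move=> h; have := has_walk_dist x y; rewrite h => /has_walk0. Qed.

Lemma dist_gt0 x y : (0 < d x y) = (x != y).
Proof.
by rewrite lt0n; congr negb; apply/eqP/eqP => [/dist0_eq | ->]; rewrite ?distxx.
Qed.

Lemma dist_triangle x y z : d x z <= d x y + d y z.
Proof. by apply: dist_le_walk; apply: has_walk_cat (has_walk_dist x y) (has_walk_dist y z). Qed.

Lemma edge_sym x y : e x y -> e y x.
Proof. by rewrite e_sym. Qed.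

Lemma edge_neq x y : e x y -> x != y.
Proof. by apply: contraTneq => ->; rewrite e_irr. Qed.

Lemma dist_edge x y : e x y -> d x y = 1.
Proof.
move=> h; apply/eqP; rewrite eqn_leq dist_gt0 edge_neq // andbT.
by apply: dist_le_walk; apply/has_walkS; exists y => //; apply/has_walk0.
Qed.

Lemma edge_dist1 x y : d x y = 1 -> e x y.
Proof. by move=> h; have := has_walk_dist x y; rewrite h => /has_walkS [z hz /has_walk0 <-]. Qed.

Lemma dist_next x y n : d x y = n.+1 -> exists2 z, e x z & d z y = n.
Proof.
move=> h; have := has_walk_dist x y; rewrite h => /has_walkS [z hz hW].
exists z => //; apply/eqP; rewrite eqn_leq dist_le_walk //=.
by have := dist_triangle x z y; rewrite h dist_edge.
Qed.

Lemma dist_edge_le x y z : e x y -> d x z <= d y z + 1.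
Proof. by move=> h; rewrite addnC -(dist_edge h) dist_triangle. Qed.

Lemma neq_of_dist u x y : d u x != d u y -> x != y.
Proof. by apply: contra_neq => ->. Qed.

Lemma dist_sub_le u x y : d u y - d u x <= d x y.
Proof. by rewrite leq_subLR dist_triangle. Qed.

Lemma dist_ge2 x y : x != y -> ~~ e x y -> 2 <= d x y.
Proof.
move=> hxy hnxy; rewrite ltn_neqAle dist_gt0 hxy andbT eq_sym.
by apply: contra hnxy => /eqP/edge_dist1.
Qed.

Lemma dist2_nonadj c a b : e c a -> e c b -> a != b -> ~~ e a b -> d a b = 2.
Proof.
move=> hca hcb hab hnab; apply/eqP; rewrite eqn_leq dist_ge2 // andbT.
by have := dist_triangle a c b; rewrite (distC a c) (dist_edge hca) (dist_edge hcb).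
Qed.

Definition geodesic n (g : nat -> T) :=
  forall i j, i <= n -> j <= n -> d (g i) (g j) = (j - i) + (i - j).

Lemma exists_geodesic x y : exists g, [/\ g 0 = x, g (d x y) = y & geodesic (d x y) g].
Proof.
move: {2}(d x y) (erefl (d x y)) => n; elim: n x => [|n IH] x hn.
  by exists (fun _ => x); split => //; [apply: dist0_eq | move=> i j; rewrite distxx; nat_lia].
have [z hz hzy] := dist_next hn; have [g [g0 gn gg]] := IH z hzy; rewrite hzy in gn gg.
exists (fun i => if i is i'.+1 then g i' else x); rewrite hn; split => //.
have hxg i : i <= n -> d x (g i) = i.+1.
  move=> hi; apply/eqP; rewrite eqn_leq; apply/andP; split.
    by have := dist_edge_le (g i) hz; rewrite -g0 gg //; nat_lia.
  by have := dist_triangle x (g i) y; rewrite hn -gn gg //; nat_lia.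
move=> [|i] [|j] hi hj /=; first by rewrite distxx.
- by rewrite hxg //; nat_lia.
- by rewrite distC hxg //; nat_lia.
- by rewrite gg //; nat_lia.
Qed.

Lemma geodesic_edge n g i : geodesic n g -> i < n -> e (g i) (g i.+1).
Proof. by move=> hg hi; apply: edge_dist1; rewrite hg //; nat_lia. Qed.

Lemma geodesic_from n g x i : g 0 = x -> geodesic n g -> i <= n -> d x (g i) = i.
Proof. by move=> <- hg hi; rewrite hg //; nat_lia. Qed.

Lemma geodesic_to n g y i : g n = y -> geodesic n g -> i <= n -> d (g i) y = n - i.
Proof. by move=> <- hg hi; rewrite hg //; nat_lia. Qed.

Lemma in_interval u v w : (w \in interval e u v) = (d u w + d w v == d u v).
Proof. by rewrite inE. Qed.

Lemma interval_pairP x y : interval e x y = [set x; y] <-> d x y <= 1.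
Proof.
split=> [h | h].
  rewrite leqNgt; apply/negP => h2.
  have [z hxz hzy] : exists2 z, e x z & d z y = (d x y).-1 by apply: dist_next; nat_lia.
  have : z \in interval e x y by rewrite in_interval dist_edge // hzy; nat_lia.
  rewrite h !inE => /orP [] /eqP hz; first by move: hxz; rewrite hz e_irr.
  by move: hzy; rewrite hz distxx; nat_lia.
apply/setP => w; rewrite in_interval !inE.
case: (ltnP (d x y) 1) => h1.
  have hxy : x = y by apply: dist0_eq; nat_lia.
  subst y; rewrite distxx orbb addn_eq0 (distC w x) andbb (eq_sym w x).
  by apply/eqP/eqP => [/dist0_eq | ->]; rewrite ?distxx.
have {}h1 : d x y = 1 by nat_lia.
rewrite h1; apply/idP/idP.
  case: (posnP (d x w)) => [/dist0_eq -> | hp]; first by rewrite eqxx.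
  move=> /eqP hs; have /dist0_eq -> : d w y = 0 by nat_lia.
  by rewrite eqxx orbT.
by case/orP => /eqP ->; rewrite distxx ?h1 // distC h1.
Qed.

Lemma interval_meet_adjacent u x y v : x != y ->
  d u x + d x y = d u y -> d x y + d y v = d x v ->
  (forall w, d u w + d w y = d u y -> d x w + d w v = d x v ->
     [\/ w = u, w = x, w = y | w = v]) ->
  d x y = 1.
Proof.
move=> hxy hx hy in_set; have hxy0 : 0 < d x y by rewrite dist_gt0.
apply/eqP; rewrite eqn_leq hxy0 andbT leqNgt; apply/negP => hxy2.
have [z hxz hzy] : exists2 z, e x z & d z y = (d x y).-1 by apply: dist_next; nat_lia.
have hxz1 := dist_edge hxz.
have z1 : d u z + d z y = d u y.
  by have := dist_triangle u z y; have := dist_triangle u x z; nat_lia.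
have z2 : d x z + d z v = d x v.
  by have := dist_triangle x z v; have := dist_triangle z y v; nat_lia.
case: (in_set z z1 z2) => ez; subst z.
- by move: hxz1; rewrite distC; nat_lia.
- by rewrite e_irr in hxz.
- by move: hzy; rewrite distxx; nat_lia.
- by nat_lia.
Qed.

Definition cycle_dist L i j := minn ((j - i) + (i - j)) (L - ((j - i) + (i - j))).

Definition cycle_isometry L (f : nat -> T) :=
  forall i j, i < L -> j < L -> d (f i) (f j) = cycle_dist L i j.

Lemma cycle_isometry_le L f :
  (forall i j, i <= j -> j < L -> d (f i) (f j) = cycle_dist L i j) -> cycle_isometry L f.
Proof.
move=> h i j hi hj; case: (leqP i j) => hij; first exact: h.
by rewrite distC h ?(ltnW hij) // /cycle_dist; nat_lia.
Qed.

Lemma cycle_isometry_edge L f i j : cycle_isometry L f ->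
  i < L -> j < L -> cycle_dist L i j = 1 -> e (f i) (f j).
Proof. by move=> hf hi hj h1; apply: edge_dist1; rewrite hf. Qed.

Lemma isometric_cycle_mkseq L f : 3 <= L -> cycle_isometry L f -> isometric_cycle e (mkseq f L).
Proof.
move=> hL hf; have f_edge := cycle_isometry_edge hf.
split; rewrite ?size_mkseq //.
- apply/(uniqP (f 0)) => i j; rewrite !inE size_mkseq => hi hj.
  rewrite !nth_mkseq // => h; have := hf i j hi hj; rewrite h distxx /cycle_dist; nat_lia.
- rewrite (cycle_path (f 0)); apply/(pathP (f 0)) => i; rewrite size_mkseq => hi.
  case: i hi => [|i] hi /=.
    rewrite -nth_last size_mkseq !nth_mkseq //; last by nat_lia.
    by apply: f_edge; rewrite /cycle_dist; nat_lia.
  by rewrite !nth_mkseq //; [apply: f_edge; rewrite /cycle_dist; nat_lia | nat_lia].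
- by move=> x0 i j hi hj; rewrite !nth_mkseq //; apply: hf.
Qed.

Lemma bridgedP : bridged e <-> forall L f, 4 <= L -> ~ cycle_isometry L f.
Proof.
split=> [hb L f hL hf | hno [|x0 s] [hs _ _ hd]] //.
  by have := hb _ (isometric_cycle_mkseq (ltnW hL) hf); rewrite size_mkseq; nat_lia.
by rewrite leqNgt; apply/negP => hL; apply: (hno _ (nth x0 (x0 :: s)) hL); apply: hd.
Qed.

Definition triangle_cond k := forall u a b, e a b -> d u a = k -> d u b = k -> 0 < k ->
  exists w, [/\ e a w, e b w & d u w = k.-1].

Definition lower_clique k := forall u c a b, d u c = k.+1 -> e c a -> e c b ->
  d u a = k -> d u b = k -> a != b -> e a b.

Lemma lower_clique_dist k u c a b : lower_clique k ->
  d u c = k.+1 -> e c a -> e c b -> d u a = k -> d u b = k -> d a b <= 1.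
Proof.
move=> lc huc hca hcb hua hub; have [-> | hab] := eqVneq a b; first by rewrite distxx.
by rewrite dist_edge //; apply: (lc u c).
Qed.

Definition triangle_filling p q := forall u x y v, e x y -> d u x = p -> d u y = p.+1 ->
  d v y = q -> d v x = q.+1 -> d u v <= p + q ->
  exists w, [/\ e x w, e y w, d u w = p & d v w = q].

Section TriangleFilling.
Variable s : nat.
Hypotheses (tc_s : forall k, k <= s -> triangle_cond k)
           (lc_s : forall k, k < s -> lower_clique k).

Lemma triangle_filling_nbr p q u x y v z : triangle_filling p q ->
  e x y -> d u y = p.+2 -> d v y = q -> d v x = q.+1 ->
  e u z -> d z x = p -> d z v <= p + q ->
  exists w, [/\ e x w, e y w, d u w = p.+1 & d v w = q].
Proof.
move=> fill hxy huy hvy hvx huz hzx hzv.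
have hzy : d z y = p.+1.
  have := dist_edge_le y huz; have := dist_triangle z x y.
  by rewrite hzx (dist_edge hxy) huy; nat_lia.
have [w [hxw hyw hzw hvw]] := fill z x y v hxy hzx hzy hvy hvx hzv.
exists w; split => //; apply/eqP; rewrite eqn_leq; apply/andP; split.
  by have := dist_edge_le w huz; rewrite hzw addn1.
by have := dist_triangle u w y; rewrite huy (distC w y) (dist_edge hyw); nat_lia.
Qed.

(* Here [d v u] is [m] or [m.+1]: the first case contradicts the lower clique
   property at c, in the second the triangle condition on the edge uc gives z. *)
Lemma detour_nbr m u c x v : m < s -> e u c -> e c x -> d u x = 2 ->
  d v c = m.+1 -> d v x = m -> d v u <= m.+1 ->
  exists z, [/\ e u z, e c z, e x z & d v z = m].
Proof.
move=> hm huc hcx hux hvc hvx hvu.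
have hnux : ~~ e u x by apply/negP => /dist_edge; rewrite hux.
have hux' : u != x by apply/eqP => hx; move: hux; rewrite hx distxx.
have hvu' : m <= d v u.
  by have := dist_edge_le v (edge_sym huc); rewrite (distC u v) (distC c v) hvc; nat_lia.
have [hvum | hvum] := eqVneq (d v u) m.
  by move: hnux; rewrite (lc_s hm hvc (edge_sym huc) hcx hvum hvx hux').
have hvu1 : d v u = m.+1 by nat_lia.
have [z [huz hcz hvz]] := tc_s hm huc hvu1 hvc (ltn0Sn m).
have hzx : z != x by apply: contraTneq huz => ->.
by exists z; split; rewrite // e_sym; apply: (lc_s hm hvc hcz hcx).
Qed.

(* With x1 the neighbour of u toward x: either x1 is no farther from v and the
   induction hypothesis applies at x1, or detour_nbr yields another neighbour
   of u, one step closer to x, at which it applies. *)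
Lemma triangle_filling_succ p q : p.+1 + q <= s ->
  triangle_filling p q -> triangle_filling p.+1 q.
Proof.
move=> hs fill u x y v hxy hux huy hvy hvx huv.
have [x1 hux1 hx1x] := dist_next hux.
have [hx1v | hx1v] := leqP (d x1 v) (p + q).
  exact: (triangle_filling_nbr fill hxy huy hvy hvx hux1 hx1x hx1v).
have hvx1 : d v x1 = (p + q).+1.
  by rewrite distC; have := dist_triangle x1 x v; rewrite hx1x (distC x v) hvx; nat_lia.
have [p0 | p_gt0] := posnP p.
  move: hx1x hux1 huy hvx1; rewrite p0 add0n => /dist0_eq -> hux1 huy hvx1.
  have hvu : d v u <= q.+1 by rewrite distC; nat_lia.
  have hqs : q < s by nat_lia.
  have [z [huz hxz hyz hvz]] := detour_nbr hqs hux1 hxy huy hvx1 hvy hvu.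
  by exists z; split => //; apply: dist_edge.
have [x2 hx12 hx2x] : exists2 x2, e x1 x2 & d x2 x = p.-1 by apply: dist_next; nat_lia.
have hux2 : d u x2 = 2.
  apply/eqP; rewrite eqn_leq; apply/andP; split.
    by have := dist_triangle u x1 x2; rewrite (dist_edge hux1) (dist_edge hx12).
  by have := dist_triangle u x2 x; rewrite hux hx2x; nat_lia.
have hvx2 : d v x2 = p + q.
  apply/eqP; rewrite eqn_leq; apply/andP; split.
    by have := dist_triangle v x x2; rewrite hvx (distC x x2) hx2x; nat_lia.
  by have := dist_edge_le v hx12; rewrite (distC x1 v) (distC x2 v) hvx1; nat_lia.
have hvu : d v u <= (p + q).+1 by rewrite distC; nat_lia.
have hpqs : p + q < s by nat_lia.
have [z [huz hx1z hx2z hvz]] := detour_nbr hpqs hux1 hx12 hux2 hvx1 hvx2 hvu.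
apply: (triangle_filling_nbr fill hxy huy hvy hvx huz); last by rewrite distC hvz.
apply/eqP; rewrite eqn_leq; apply/andP; split.
  by have := dist_triangle z x2 x; rewrite hx2x (distC z x2) (dist_edge hx2z); nat_lia.
by have := dist_edge_le x huz; rewrite hux; nat_lia.
Qed.

Lemma triangle_filling_le p q : p + q <= s -> triangle_filling p q.
Proof.
elim: p q => [|p IH] q hs.
  move=> u x y v _ /dist0_eq <- _ _ hvx; rewrite distC hvx; nat_lia.
by apply: triangle_filling_succ => //; apply: IH; nat_lia.
Qed.

End TriangleFilling.

Lemma triangle_cond1 : triangle_cond 1.
Proof.
move=> u a b _ hua hub _; exists u.
by split; rewrite ?distxx // e_sym edge_dist1.
Qed.

Lemma lower_clique0 : lower_clique 0.
Proof. by move=> u c a b _ _ _ /dist0_eq <- /dist0_eq <-; rewrite eqxx. Qed.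

Section FromAxioms.
Hypotheses (HJ : cond_J0' (interval e)) (HB : cond_br (interval e)).

Lemma br_dist x y u v z : d x y <= 1 -> d x u <= 1 -> d v y <= 1 ->
  d u z + d z v = d u v -> d x z <= 1 \/ d y z <= 1.
Proof.
move=> /interval_pairP hxy /interval_pairP hxu /interval_pairP hvy huv.
have := HB (z := z) hxy hxu hvy; rewrite in_interval huv eqxx => /(_ isT).
by case=> /interval_pairP; tauto.
Qed.

Lemma br_nbr w u v z : e w u -> e w v -> d u z + d z v = d u v -> d w z <= 1.
Proof.
move=> hwu hwv huv; have := @br_dist w w u v z.
by rewrite distxx (dist_edge hwu) distC (dist_edge hwv) => /(_ isT isT isT huv) [].
Qed.

Lemma J0_dist u x y v : uniq [:: u; x; y; v] ->
  d u x + d x y = d u y -> d x y + d y v = d x v -> d u x + d x v != d u v ->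
  exists w, [/\ d u w + d w y = d u y, d x w + d w v = d x v &
                [&& w != u, w != x, w != y & w != v]].
Proof.
move=> huq hx hy hxv.
have : ~~ (interval e u y :&: interval e x v \subset [set u; x; y; v]).
  apply: contra hxv => hsub; have := HJ huq; rewrite !in_interval hx hy !eqxx.
  exact.
case/subsetPn => w; rewrite inE !in_interval !inE !negb_or => /andP [/eqP hw1 /eqP hw2] hw.
by rewrite -!andbA in hw; exists w.
Qed.

(* (J0') at a, c, b, u gives a common neighbour w of a and b at level k; the
   triangles below aw and wb then violate (br) at c. *)
Lemma lower_clique_step k : 0 < k -> triangle_cond k -> lower_clique k.-1 -> lower_clique k.
Proof.
move=> hk tc lc u c a b huc hca hcb hua hub hab; apply/negPn/negP => hnab.
have hdab := dist2_nonadj hca hcb hab hnab.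
have hc_ab : d a c + d c b = d a b.
  by rewrite (distC a c) (dist_edge hca) (dist_edge hcb) hdab.
have huq : uniq [:: a; c; b; u].
  have hau : a != u by rewrite -dist_gt0 distC hua.
  have hbu : b != u by rewrite -dist_gt0 distC hub.
  have hcu : c != u by rewrite -dist_gt0 distC huc.
  by rewrite /= !inE !negb_or eq_sym (edge_neq hca) hab hau (edge_neq hcb) hcu hbu.
have hb_cu : d c b + d b u = d c u by rewrite (dist_edge hcb) !(distC _ u) hub huc.
have hc_au : d a c + d c u != d a u.
  by rewrite (distC a c) (dist_edge hca) !(distC _ u) huc hua; nat_lia.
have [w [haw hcw /and4P [hwa hwc hwb _]]] := J0_dist huq hc_ab hb_cu hc_au.
have haw0 : 0 < d a w by rewrite dist_gt0 eq_sym.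
have hwb0 : 0 < d w b by rewrite dist_gt0.
have hwa1 : d a w = 1 by rewrite hdab in haw; nat_lia.
have hwb1 : d w b = 1 by rewrite hdab in haw; nat_lia.
have hcw1 : d c w = 1.
  by have := br_nbr hca hcb haw; have := dist_gt0 c w; rewrite eq_sym hwc; nat_lia.
have huw : d u w = k by move: hcw; rewrite hcw1 !(distC _ u) huc; nat_lia.
have [a' [haa' hwa' hua']] := tc u a w (edge_dist1 hwa1) hua huw hk.
have [b' [hwb' hbb' hub']] := tc u w b (edge_dist1 hwb1) huw hub hk.
have far_c z : d u z = k.-1 -> 2 <= d z c.
  by move=> hz; have := dist_sub_le u z c; rewrite hz huc; nat_lia.
have [ea | ha'b'] := eqVneq a' b'.
  subst b'; have := far_c a' hua'.
  by have := br_nbr (edge_sym haa') (edge_sym hbb') hc_ab; nat_lia.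
have ha'b'e : e a' b'.
  by apply: (lc u w) => //; rewrite huw prednK.
have h1 : d a' b' <= 1 by rewrite dist_edge.
have h2 : d a' a <= 1 by rewrite distC dist_edge.
have h3 : d b b' <= 1 by rewrite dist_edge.
have := far_c a' hua'; have := far_c b' hub'.
by case: (br_dist h1 h2 h3 hc_ab); nat_lia.
Qed.

Section TriangleCondStep.
Variable k : nat.
Hypotheses (k_gt0 : 0 < k) (tc : triangle_cond k) (lc : lower_clique k).
Variables u a b : T.
Hypotheses (hab : e a b) (hua : d u a = k.+1) (hub : d u b = k.+1).
Hypothesis no_common : forall w, e a w -> e b w -> d u w = k -> False.

Lemma dist_to_lower_nbr b1 : e u b1 -> d b1 b = k -> d a b1 = k.+1.
Proof.
move=> hub1 hb1b; have := dist_edge_le a hub1; have := dist_triangle a b b1.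
rewrite (dist_edge hab) (distC b b1) hb1b (distC a b1) hua => ub lb.
have [hb1a | ?] := eqVneq (d b1 a) k; last by nat_lia.
have [w [haw hbw hb1w]] := tc hab hb1a hb1b k_gt0.
exfalso; apply: (no_common haw hbw); apply/eqP; rewrite eqn_leq; apply/andP; split.
  by have := dist_triangle u b1 w; rewrite (dist_edge hub1) hb1w; nat_lia.
by have := dist_edge_le u haw; rewrite !(distC _ u) hua; nat_lia.
Qed.

Lemma common_nbr_far a' b1 : e a a' -> d u a' = k -> e u b1 -> d b1 b = k -> ~~ e a' b ->
  exists w, [/\ e a' w, e b w, e a w & d w b1 = k].
Proof.
move=> haa' hua' hub1 hb1b hna'b.
have ha'b : a' != b by apply: (@neq_of_dist u); rewrite hua' hub; nat_lia.
have ha'b2 := dist2_nonadj haa' hab ha'b hna'b.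
have hab1 := dist_to_lower_nbr hub1 hb1b.
have huq : uniq [:: a'; a; b; b1].
  have ha'b1 : a' != b1 by apply: (@neq_of_dist a); rewrite hab1 (dist_edge haa'); nat_lia.
  have hab1' : a != b1 by rewrite -dist_gt0 hab1.
  have hbb1 : b != b1 by rewrite eq_sym -dist_gt0 hb1b.
  by rewrite /= !inE !negb_or eq_sym (edge_neq haa') ha'b ha'b1 (edge_neq hab) hab1' hbb1.
have ha_a'b : d a' a + d a b = d a' b.
  by rewrite (distC a' a) (dist_edge haa') (dist_edge hab) ha'b2.
have hb_ab1 : d a b + d b b1 = d a b1 by rewrite (dist_edge hab) (distC b b1) hb1b hab1.
have ha_a'b1 : d a' a + d a b1 != d a' b1.
  have := dist_triangle a' u b1.
  by rewrite (distC a' a) (dist_edge haa') hab1 (distC a' u) hua' (dist_edge hub1); nat_lia.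
have [w [ha'w haw /and4P [hwa' hwa hwb _]]] := J0_dist huq ha_a'b hb_ab1 ha_a'b1.
have hwa'0 : 0 < d a' w by rewrite dist_gt0 eq_sym.
have hwb0 : 0 < d w b by rewrite dist_gt0.
have haw0 : 0 < d a w by rewrite dist_gt0 eq_sym.
have := br_nbr haa' hab ha'w.
rewrite ha'b2 in ha'w; rewrite hab1 in haw.
exists w; split; last by nat_lia.
- by apply: edge_dist1; nat_lia.
- by rewrite e_sym; apply: edge_dist1; nat_lia.
- by apply: edge_dist1; nat_lia.
Qed.

(* (J0') at a', a, b, b1 gives w adjacent to a', a and b at level k + 1; the
   triangle below wb seen from b1 yields a common neighbour of a and b at level k. *)
Lemma no_common_nbr_absurd : False.
Proof.
have [a' haa' ha'u] : exists2 a', e a a' & d a' u = k by apply: dist_next; rewrite distC.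
have hua' : d u a' = k by rewrite distC.
have [b1 hub1 hb1b] := dist_next hub.
have hna'b : ~~ e a' b by apply/negP => h; apply: (no_common haa' (edge_sym h) hua').
have [w [ha'w hbw haw hwb1]] := common_nbr_far haa' hua' hub1 hb1b hna'b.
have huw : d u w = k.+1.
  have := dist_edge_le u haw; have := dist_triangle u b1 w.
  rewrite (dist_edge hub1) (distC b1 w) hwb1 !(distC _ u) hua.
  have : d u w != k by apply/eqP; apply: no_common.
  nat_lia.
have hb1w : d b1 w = k by rewrite distC.
have [t [hwt hbt hb1t]] := tc (edge_sym hbw) hb1w hb1b k_gt0.
have hut : d u t = k.
  have := dist_triangle u b1 t; have := dist_edge_le u hbt.
  by rewrite (dist_edge hub1) hb1t !(distC _ u) hub; nat_lia.
have ha't : e a' t.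
  have ha't : a' != t by apply: contraNneq hna'b => ->; rewrite e_sym.
  exact: (lc huw (edge_sym ha'w) hwt hua' hut ha't).
have hat : d a t <= 1.
  apply: (br_nbr haa' hab).
  by rewrite (dist_edge ha't) (distC t b) (dist_edge hbt) (dist2_nonadj haa' hab _ hna'b) //;
    apply: (@neq_of_dist u); rewrite hua' hub; nat_lia.
have hat0 : 0 < d a t by rewrite dist_gt0; apply: (@neq_of_dist u); rewrite hua hut; nat_lia.
by apply: (no_common _ hbt hut); apply: edge_dist1; nat_lia.
Qed.

End TriangleCondStep.

Lemma triangle_cond_step k : 0 < k -> triangle_cond k -> lower_clique k -> triangle_cond k.+1.
Proof.
move=> hk tc lc u a b hab hua hub _.
case: (boolP [exists w, [&& e a w, e b w & d u w == k]]).
  by case/existsP => w /and3P [haw hbw /eqP huw]; exists w.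
move/existsPn => none; exfalso; apply: (no_common_nbr_absurd hk tc lc hab hua hub).
by move=> w haw hbw huw; move: (none w); rewrite haw hbw huw eqxx.
Qed.

Lemma triangle_lower_clique_of_axioms k : triangle_cond k /\ lower_clique k.
Proof.
elim: k => [|k [tc lc]]; first by split; [move=> ? ? ? _ _ _ | exact: lower_clique0].
have tc' : triangle_cond k.+1.
  by case: (posnP k) => [-> | hk]; [exact: triangle_cond1 | exact: triangle_cond_step].
by split => //; apply: lower_clique_step.
Qed.

Lemma no_even_cycle_isometry m f : 2 <= m -> ~ cycle_isometry (m + m) f.
Proof.
move=> hm hf; have lc := (triangle_lower_clique_of_axioms m.-1).2.
have : e (f m.-1) (f m.+1).
  apply: (lc (f 0) (f m)).
  - by rewrite hf /cycle_dist; nat_lia.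
  - by apply: (cycle_isometry_edge hf); rewrite /cycle_dist; nat_lia.
  - by apply: (cycle_isometry_edge hf); rewrite /cycle_dist; nat_lia.
  - by rewrite hf /cycle_dist; nat_lia.
  - by rewrite hf /cycle_dist; nat_lia.
  - by apply: (@neq_of_dist (f m.-1)); rewrite distxx hf /cycle_dist; nat_lia.
by move/dist_edge; rewrite hf /cycle_dist; nat_lia.
Qed.

Lemma no_odd_cycle_isometry m f : 2 <= m -> ~ cycle_isometry (m + m).+1 f.
Proof.
move=> hm hf; have [m2 | hm3] := eqVneq m 2.
  (* here f m.-1 and f m.+2 are adjacent; (br) is violated instead *)
  subst m; have := @br_dist (f 0) (f 1) (f 4) (f 2) (f 3).
  by rewrite !hf // => /(_ isT isT isT erefl) [].
have [tc _] := triangle_lower_clique_of_axioms m.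
have [_ lc] := triangle_lower_clique_of_axioms m.-1.
have [w [hmw hm1w hw]] : exists w, [/\ e (f m) w, e (f m.+1) w & d (f 0) w = m.-1].
  apply: tc; first (apply: (cycle_isometry_edge hf); rewrite /cycle_dist);
    rewrite ?hf /cycle_dist; nat_lia.
have h1 : d (f m.-1) w <= 1.
  apply: (lower_clique_dist lc (_ : d (f 0) (f m) = _) _ hmw) => //.
  - by rewrite hf /cycle_dist; nat_lia.
  - by apply: (cycle_isometry_edge hf); rewrite /cycle_dist; nat_lia.
  - by rewrite hf /cycle_dist; nat_lia.
have h2 : d w (f m.+2) <= 1.
  apply: (lower_clique_dist lc (_ : d (f 0) (f m.+1) = _) hm1w) => //.
  - by rewrite hf /cycle_dist; nat_lia.
  - by apply: (cycle_isometry_edge hf); rewrite /cycle_dist; nat_lia.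
  - by rewrite hf /cycle_dist; nat_lia.
by have := dist_triangle (f m.-1) w (f m.+2); rewrite hf /cycle_dist; nat_lia.
Qed.

Lemma bridged_of_axioms : bridged e.
Proof.
apply/bridgedP => L f hL; rewrite -(odd_double_half L) -addnn.
have := odd_double_half L; case: (odd L) => /= hL2.
  by rewrite add1n; apply: no_odd_cycle_isometry; nat_lia.
by apply: no_even_cycle_isometry; nat_lia.
Qed.

End FromAxioms.

Section Bridged.
Hypothesis hb : bridged e.

Lemma no_isometric_square a b c x : e a b -> e b c -> e c x -> e x a ->
  d a c = 2 -> d b x = 2 -> False.
Proof.
move=> hab hbc hcx hxa hac hbx; apply: (bridgedP.1 hb 4 (nth a [:: a; b; c; x])) => //.
apply: cycle_isometry_le => -[|[|[|[|i]]]] [|[|[|[|j]]]] //= _ _;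
  first [by rewrite distxx | by rewrite dist_edge | by rewrite distC dist_edge
        | by rewrite hac | by rewrite hbx].
Qed.

Lemma no_isometric_pentagon a b c x y : e a b -> e b c -> e c x -> e x y -> e y a ->
  d a c = 2 -> d a x = 2 -> d b x = 2 -> d b y = 2 -> d c y = 2 -> False.
Proof.
move=> hab hbc hcx hxy hya hac hax hbx hby hcy.
apply: (bridgedP.1 hb 5 (nth a [:: a; b; c; x; y])) => //.
apply: cycle_isometry_le => -[|[|[|[|[|i]]]]] [|[|[|[|[|j]]]]] //= _ _;
  first [by rewrite distxx | by rewrite dist_edge | by rewrite distC dist_edge
        | by rewrite hac | by rewrite hax | by rewrite hbx | by rewrite hby | by rewrite hcy].
Qed.

Section TriangleCondBridged.
Variable k : nat.
Hypotheses (k_gt1 : 1 < k) (tc_lt : forall j, j < k -> triangle_cond j)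
           (lc_lt : forall j, j < k -> lower_clique j).
Variable u : T.

Lemma dist_to_geodesic a b B : e a b -> d u a = k -> d u b = k ->
  (forall w, e a w -> e b w -> d u w = k.-1 -> False) ->
  B 0 = u -> B k = b -> geodesic k B ->
  forall j, 0 < j -> j <= k -> d a (B j) = k - j + 1.
Proof.
move=> hab hua hub none B0 Bk gB j hj0 hjk.
have [-> | hjk'] := eqVneq j k; first by rewrite Bk dist_edge // subnn.
have hBu : d u (B j) = j by rewrite (geodesic_from B0 gB).
have hBb : d (B j) b = k - j by rewrite (geodesic_to Bk gB).
have := dist_sub_le u (B j) a; have := dist_triangle a b (B j).
rewrite (dist_edge hab) (distC b) hBb hua hBu (distC (B j)) => ub lb.
have [haB | ?] := eqVneq (d a (B j)) (k - j); last by nat_lia.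
have hBa : d (B j) a = k - j by rewrite distC.
have hkj : k - j < k by nat_lia.
have hkj0 : 0 < k - j by nat_lia.
have [w [haw hbw hBw]] := tc_lt hkj hab hBa hBb hkj0.
exfalso; apply: (none w haw hbw); apply/eqP; rewrite eqn_leq; apply/andP; split.
  by have := dist_triangle u (B j) w; rewrite hBu hBw; nat_lia.
by have := dist_edge_le u haw; rewrite !(distC _ u) hua; nat_lia.
Qed.

(* The geodesics A and B from u to a and b, closed by the edge ab, form an
   isometric cycle of length 2k + 1. *)
Section Cycle.
Variables (a b : T) (A B : nat -> T).
Hypotheses (hab : e a b) (hua : d u a = k) (hub : d u b = k).
Hypothesis none : forall w, e a w -> e b w -> d u w = k.-1 -> False.
Hypotheses (A0 : A 0 = u) (Ak : A k = a) (gA : geodesic k A).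
Hypotheses (B0 : B 0 = u) (Bk : B k = b) (gB : geodesic k B).

Lemma dist_a_B j : 0 < j -> j <= k -> d a (B j) = k - j + 1.
Proof. exact: (dist_to_geodesic hab hua hub none B0 Bk gB). Qed.

Lemma dist_b_A i : 0 < i -> i <= k -> d b (A i) = k - i + 1.
Proof.
have none' w : e b w -> e a w -> d u w = k.-1 -> False by move=> hbw haw; apply: none.
exact: (dist_to_geodesic (edge_sym hab) hub hua none' A0 Ak gA).
Qed.

(* The triangles below aw and bw seen from A i and B j have apexes t and s
   at level k - 1, and a, b, s, t is an isometric square. *)
Lemma common_nbr_level_absurd i j w : 0 < i < k -> 0 < j < k ->
  e a w -> e b w -> d (A i) w = k - i -> d (B j) w = k - j -> False.
Proof.
move=> /andP [hi0 hik] /andP [hj0 hjk] haw hbw hAw hBw.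
have huw : d u w = k.
  have := dist_triangle u (A i) w; have := dist_edge_le u haw.
  rewrite (geodesic_from A0 gA (ltnW hik)) hAw !(distC _ u) hua.
  have : d u w != k.-1 by apply/eqP; apply: none.
  nat_lia.
have [hki hki0] : k - i < k /\ 0 < k - i by nat_lia.
have [hkj hkj0] : k - j < k /\ 0 < k - j by nat_lia.
have [t [hat hwt hAt]] := tc_lt hki haw (geodesic_to Ak gA (ltnW hik)) hAw hki0.
have [s [hbs hws hBs]] := tc_lt hkj hbw (geodesic_to Bk gB (ltnW hjk)) hBw hkj0.
have hut : d u t = k.-1.
  have := dist_triangle u (A i) t; have := dist_edge_le u hat.
  by rewrite (geodesic_from A0 gA (ltnW hik)) hAt !(distC _ u) hua; nat_lia.
have hus : d u s = k.-1.
  have := dist_triangle u (B j) s; have := dist_edge_le u hbs.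
  by rewrite (geodesic_from B0 gB (ltnW hjk)) hBs !(distC _ u) hub; nat_lia.
have hts : t != s by apply/eqP => ets; subst s; apply: (none hat hbs hut).
have hts' : e t s.
  by apply: (lc_lt _ (_ : d u w = k.-1.+1) hwt hws hut hus hts); nat_lia.
have has : a != s by apply: (@neq_of_dist u); rewrite hua hus; nat_lia.
have hbt : b != t by apply: (@neq_of_dist u); rewrite hub hut; nat_lia.
have hnas : ~~ e a s by apply/negP => h; apply: (none h hbs hus).
have hnbt : ~~ e b t by apply/negP => h; apply: (none hat h hut).
apply: (no_isometric_square hab hbs (edge_sym hts') (edge_sym hat)).
  exact: dist2_nonadj (edge_sym hab) hbs has hnas.
exact: dist2_nonadj hab hat hbt hnbt.
Qed.

Lemma dist_A_B_far i j : 0 < i -> i <= k -> 0 < j -> j <= k -> k < i + j ->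
  d (A i) (B j) = k.*2.+1 - i - j.
Proof.
move=> hi0 hik hj0 hjk hij.
have [-> | hi] := eqVneq i k; first by rewrite Ak dist_a_B //; nat_lia.
have [-> | hj] := eqVneq j k; first by rewrite Bk distC dist_b_A //; nat_lia.
have ub : d (A i) (B j) <= k - i + 1 + (k - j).
  have := dist_triangle (A i) a (B j); have := dist_triangle a b (B j).
  by rewrite (geodesic_to Ak gA hik) (dist_edge hab) (distC b) (geodesic_to Bk gB hjk); nat_lia.
have [hlt | ?] := ltnP (d (A i) (B j)) (k - i + 1 + (k - j)); last by nat_lia.
exfalso; have hs : k - i + (k - j) < k by nat_lia.
have fill : triangle_filling (k - i) (k - j).
  apply: (triangle_filling_le (s := k - i + (k - j))) => // h hh.
  - exact: tc_lt (leq_ltn_trans hh hs).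
  - exact: lc_lt (ltn_trans hh hs).
have hAb : d (A i) b = (k - i).+1 by rewrite distC dist_b_A //; nat_lia.
have hBa : d (B j) a = (k - j).+1 by rewrite distC dist_a_B //; nat_lia.
have hAB : d (A i) (B j) <= k - i + (k - j) by nat_lia.
have [w [haw hbw hAw hBw]] :=
  fill _ _ _ _ hab (geodesic_to Ak gA hik) hAb (geodesic_to Bk gB hjk) hBa hAB.
have hi' : 0 < i < k by rewrite hi0 ltn_neqAle hi hik.
have hj' : 0 < j < k by rewrite hj0 ltn_neqAle hj hjk.
exact: (common_nbr_level_absurd hi' hj' haw hbw hAw hBw).
Qed.

Lemma dist_A_B_mid i j : 0 < i -> 0 < j -> i + j = k -> d (A i) (B j) = k.
Proof.
move=> hi0 hj0 hij; have [hik hjk] : i < k /\ j <= k by nat_lia.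
have h1 : d (A i.+1) (B j) = k by rewrite dist_A_B_far //; nat_lia.
apply/eqP; rewrite eqn_leq; apply/andP; split.
  have := dist_triangle (A i) u (B j).
  by rewrite (distC (A i) u) (geodesic_from A0 gA (ltnW hik)) (geodesic_from B0 gB hjk) hij.
rewrite leqNgt; apply/negP => hlt.
have hAB : d (A i) (B j) = k.-1.
  by have := dist_triangle (A i.+1) (A i) (B j); rewrite h1 gA; nat_lia.
have [N [hN hBN hAN]] : exists N, [/\ e (A i.+1) N, d (B j) N = k.-1 & d (A i) N = 2].
  have [hi1 | hi1] := eqVneq i.+1 k.
    exists b; rewrite hi1 Ak; split => //; first by rewrite (geodesic_to Bk gB hjk); nat_lia.
    by rewrite distC dist_b_A; nat_lia.
  exists (A i.+2); split; first by apply: (geodesic_edge gA); nat_lia.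
    by rewrite distC dist_A_B_far; nat_lia.
  by rewrite gA; nat_lia.
have hBA1 : d (B j) (A i.+1) = k.-1.+1 by rewrite distC h1; nat_lia.
have hBA : d (B j) (A i) = k.-1 by rewrite distC.
have hA1A : e (A i.+1) (A i) by rewrite e_sym; apply: (geodesic_edge gA); nat_lia.
have hk1 : k.-1 < k by nat_lia.
by have := lower_clique_dist (lc_lt hk1) hBA1 hA1A hN hBA hBN; rewrite hAN.
Qed.

Lemma dist_A_B_near i j : 0 < i -> 0 < j -> i + j <= k -> d (A i) (B j) = i + j.
Proof.
move=> + hj0 /subnKC; move: (k - (i + j)) => m; elim: m i => [|m IH] i hi0 hk.
  by rewrite dist_A_B_mid //; nat_lia.
apply/eqP; rewrite eqn_leq; apply/andP; split.
  have := dist_triangle (A i) u (B j).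
  by rewrite (distC (A i) u) (geodesic_from A0 gA) ?(geodesic_from B0 gB); nat_lia.
have := IH i.+1 isT; have := dist_triangle (A i.+1) (A i) (B j).
by rewrite gA; nat_lia.
Qed.

Lemma dist_A_B i j : i <= k -> 0 < j -> j <= k ->
  d (A i) (B j) = minn (i + j) (k.*2.+1 - i - j).
Proof.
move=> hik hj0 hjk; have [-> | hi0] := posnP i.
  by rewrite A0 (geodesic_from B0 gB) //; nat_lia.
have [hij | hij] := leqP (i + j) k; first by rewrite dist_A_B_near //; nat_lia.
by rewrite dist_A_B_far //; nat_lia.
Qed.

Lemma no_common_nbr_absurd_bridged : False.
Proof.
apply: (bridgedP.1 hb k.*2.+1 (fun n => if n <= k then A n else B (k.*2.+1 - n))).
  by nat_lia.
apply: cycle_isometry_le => n1 n2 h12 hn2 /=.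
have [h2 | h2] := leqP n2 k; first by rewrite (leq_trans h12 h2) /cycle_dist gA; nat_lia.
have [h1 | h1] := leqP n1 k; first by rewrite /cycle_dist dist_A_B; nat_lia.
by rewrite /cycle_dist gB; nat_lia.
Qed.

End Cycle.
End TriangleCondBridged.

Lemma triangle_cond_bridged k : (forall j, j < k -> triangle_cond j) ->
  (forall j, j < k -> lower_clique j) -> triangle_cond k.
Proof.
move=> tc_lt lc_lt u a b hab hua hub hk.
have [k1 | k_gt1] := leqP k 1.
  by exists u; split; rewrite ?distxx ?(e_sym _ u) ?edge_dist1 //; nat_lia.
case: (boolP [exists w, [&& e a w, e b w & d u w == k.-1]]).
  by case/existsP => w /and3P [haw hbw /eqP huw]; exists w.
move/existsPn => none; exfalso.
have [A [A0 Ak gA]] := exists_geodesic u a; rewrite hua in Ak gA.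
have [B [B0 Bk gB]] := exists_geodesic u b; rewrite hub in Bk gB.
apply: (no_common_nbr_absurd_bridged k_gt1 tc_lt lc_lt hab hua hub _ A0 Ak gA B0 Bk gB).
by move=> w haw hbw huw; move: (none w); rewrite haw hbw huw eqxx.
Qed.

Section LowerCliqueBridged.
Variable k : nat.
Hypotheses (k_gt0 : 0 < k) (tc_le : forall j, j <= k -> triangle_cond j)
           (lc_lt : forall j, j < k -> lower_clique j).
Variables u c : T.
Hypothesis huc : d u c = k.+1.

(* The lower neighbours of w toward u close an isometric square or pentagon
   with a, c and b. *)
Lemma nonadj_common_nbr_absurd a b w : e c a -> e c b -> d u a = k -> d u b = k ->
  a != b -> ~~ e a b -> e a w -> e b w -> d u w = k -> False.
Proof.
move=> hca hcb hua hub hab hnab haw hbw huw.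
have hdab := dist2_nonadj hca hcb hab hnab.
have [a' [haa' hwa' hua']] := tc_le (leqnn k) haw hua huw k_gt0.
have [b' [hwb' hbb' hub']] := tc_le (leqnn k) (edge_sym hbw) huw hub k_gt0.
have dist_c z x : d u z = k.-1 -> e x z -> e c x -> d c z = 2.
  move=> huz hxz hcx; apply/eqP; rewrite eqn_leq; apply/andP; split.
    by have := dist_triangle c x z; rewrite (dist_edge hcx) (dist_edge hxz).
  by have := dist_sub_le u z c; rewrite huz huc (distC z c); nat_lia.
have hca' := dist_c a' a hua' haa' hca.
have hcb' := dist_c b' b hub' hbb' hcb.
have hnba' : ~~ e b a'.
  apply/negP => hba'.
  exact: (no_isometric_square (edge_sym hca) hcb hba' (edge_sym haa') hdab hca').
have hnab' : ~~ e a b'.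
  apply/negP => hab'; apply: (no_isometric_square (edge_sym hcb) hca hab' (edge_sym hbb') _ hcb').
  by rewrite distC.
have ha'b' : a' != b' by apply: contraNneq hnba' => ->.
have he : e a' b'.
  by apply: (lc_lt (_ : k.-1 < k) (_ : d u w = k.-1.+1) hwa' hwb' hua' hub' ha'b'); nat_lia.
have hab'2 : d a b' = 2.
  apply: (dist2_nonadj (edge_sym haa') he _ hnab').
  by apply: (@neq_of_dist u); rewrite hua hub'; nat_lia.
have hba'2 : d b a' = 2.
  apply: (dist2_nonadj (edge_sym hbb') (edge_sym he) _ hnba').
  by apply: (@neq_of_dist u); rewrite hub hua'; nat_lia.
exact: (no_isometric_pentagon (edge_sym hca) hcb hbb' (edge_sym he) (edge_sym haa')
          hdab hab'2 hcb' hca' hba'2).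
Qed.

Lemma dist_to_far_nbr a b x i : e c a -> e c b -> d u a = k -> d u b = k ->
  a != b -> ~~ e a b -> 0 < i -> i <= k -> d u x = i -> d x a = k - i ->
  d x b = k - i + 2.
Proof.
move=> hca hcb hua hub hab hnab hi0 hik hux hxa.
have hxc : d x c = (k - i).+1.
  apply/eqP; rewrite eqn_leq; apply/andP; split.
    by have := dist_triangle x a c; rewrite hxa (distC a c) (dist_edge hca); nat_lia.
  by have := dist_sub_le u x c; rewrite hux huc; nat_lia.
have := dist_sub_le u x b; have := dist_triangle x c b.
rewrite hxc (dist_edge hcb) hux hub => ub lb.
have hki : k - i < k by nat_lia.
have [hxb | ?] := eqVneq (d x b) (k - i).
  by move: hnab; rewrite (lc_lt hki hxc hca hcb hxa hxb hab).
have [hxb | ?] := eqVneq (d x b) (k - i).+1; last by nat_lia.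
exfalso; have hki1 : (k - i).+1 <= k by nat_lia.
have [w [hcw hbw hxw]] := tc_le hki1 hcb hxc hxb (ltn0Sn _).
have haw : e a w.
  have haw : a != w by apply: contraNneq hnab => ->; rewrite e_sym.
  exact: (lc_lt hki hxc hca hcw hxa hxw haw).
apply: (nonadj_common_nbr_absurd hca hcb hua hub hab hnab haw hbw).
apply/eqP; rewrite eqn_leq; apply/andP; split.
  by have := dist_triangle u x w; rewrite hux hxw; nat_lia.
by have := dist_edge_le u hcw; rewrite !(distC _ u) huc; nat_lia.
Qed.

Lemma dist_geodesic_apex x g i : e c x -> g 0 = u -> g k = x -> geodesic k g ->
  i <= k -> d (g i) c = k.+1 - i.
Proof.
move=> hcx g0 gk hg hik; apply/eqP; rewrite eqn_leq; apply/andP; split.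
  have := dist_triangle (g i) x c.
  by rewrite (geodesic_to gk hg hik) (distC x c) (dist_edge hcx); nat_lia.
by have := dist_sub_le u (g i) c; rewrite (geodesic_from g0 hg hik) huc; nat_lia.
Qed.

(* The geodesics A and B from u to a and b, joined through c, form an
   isometric cycle of length 2k + 2. *)
Section Cycle.
Variables (a b : T) (A B : nat -> T).
Hypotheses (hca : e c a) (hcb : e c b) (hua : d u a = k) (hub : d u b = k).
Hypotheses (hab : a != b) (hnab : ~~ e a b).
Hypotheses (A0 : A 0 = u) (Ak : A k = a) (gA : geodesic k A).
Hypotheses (B0 : B 0 = u) (Bk : B k = b) (gB : geodesic k B).

Lemma dist_A_b i : 0 < i -> i <= k -> d (A i) b = k - i + 2.
Proof.
move=> hi0 hik; apply: (dist_to_far_nbr hca hcb hua hub hab hnab hi0 hik).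
  exact: geodesic_from A0 gA hik.
exact: geodesic_to Ak gA hik.
Qed.

Lemma dist_B_a j : 0 < j -> j <= k -> d (B j) a = k - j + 2.
Proof.
move=> hj0 hjk; apply: (dist_to_far_nbr hcb hca hub hua _ _ hj0 hjk).
- by rewrite eq_sym.
- by rewrite e_sym.
- exact: geodesic_from B0 gB hjk.
- exact: geodesic_to Bk gB hjk.
Qed.

Lemma dist_A_B_far_c i j : 0 < i -> i <= k -> 0 < j -> j <= k -> k < i + j ->
  d (A i) (B j) = k.*2.+2 - i - j.
Proof.
move=> hi0 hik hj0 hjk hij.
have [-> | hi] := eqVneq i k; first by rewrite Ak distC dist_B_a //; nat_lia.
have [-> | hj] := eqVneq j k; first by rewrite Bk dist_A_b //; nat_lia.
have hAc := dist_geodesic_apex hca A0 Ak gA hik.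
have hBc := dist_geodesic_apex hcb B0 Bk gB hjk.
have ub : d (A i) (B j) <= k.+1 - i + (k.+1 - j).
  by have := dist_triangle (A i) c (B j); rewrite hAc (distC c) hBc.
have [hlt | ?] := ltnP (d (A i) (B j)) (k.+1 - i + (k.+1 - j)); last by nat_lia.
exfalso; have hs : k.+1 - i + (k - j) <= k by nat_lia.
have fill : triangle_filling (k.+1 - i) (k - j).
  apply: (triangle_filling_le (s := k.+1 - i + (k - j))) => // h hh.
  - exact: tc_le (leq_trans hh hs).
  - exact: lc_lt (leq_trans hh hs).
have hAb : d (A i) b = (k.+1 - i).+1 by rewrite dist_A_b //; nat_lia.
have hBc' : d (B j) c = (k - j).+1 by rewrite hBc; nat_lia.
have hAB : d (A i) (B j) <= k.+1 - i + (k - j) by nat_lia.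
have [w [hcw hbw hAw hBw]] := fill _ _ _ _ hcb hAc hAb (geodesic_to Bk gB hjk) hBc' hAB.
have huw : d u w = k.
  apply/eqP; rewrite eqn_leq; apply/andP; split.
    by have := dist_triangle u (B j) w; rewrite (geodesic_from B0 gB hjk) hBw; nat_lia.
  by have := dist_edge_le u hcw; rewrite !(distC _ u) huc; nat_lia.
have haw : a != w by apply: contraNneq hnab => ->; rewrite e_sym.
have [haw' | hnaw] := boolP (e a w).
  exact: (nonadj_common_nbr_absurd hca hcb hua hub hab hnab haw' hbw huw).
have := dist_to_far_nbr hca hcw hua huw haw hnaw hi0 hik (geodesic_from A0 gA hik)
  (geodesic_to Ak gA hik).
by rewrite hAw; nat_lia.
Qed.

Lemma dist_A_B_near_c i j : 0 < i -> 0 < j -> i + j <= k -> d (A i) (B j) = i + j.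
Proof.
have squeeze h : h < k -> j <= k -> d (A h.+1) (B j) = h.+1 + j -> d (A h) (B j) = h + j.
  move=> hhk hjk h1; apply/eqP; rewrite eqn_leq; apply/andP; split.
    have := dist_triangle (A h) u (B j).
    by rewrite (distC _ u) (geodesic_from A0 gA) ?(geodesic_from B0 gB) //; nat_lia.
  by have := dist_triangle (A h.+1) (A h) (B j); rewrite gA; nat_lia.
move=> + hj0 /subnKC; move: (k - (i + j)) => m; elim: m i => [|m IH] i hi0 hk.
  by apply: squeeze; rewrite ?dist_A_B_far_c //; nat_lia.
by apply: squeeze; rewrite ?IH //; nat_lia.
Qed.

Lemma dist_A_B_c i j : i <= k -> 0 < j -> j <= k ->
  d (A i) (B j) = minn (i + j) (k.*2.+2 - i - j).
Proof.
move=> hik hj0 hjk; have [-> | hi0] := posnP i.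
  by rewrite A0 (geodesic_from B0 gB) //; nat_lia.
have [hij | hij] := leqP (i + j) k; first by rewrite dist_A_B_near_c //; nat_lia.
by rewrite dist_A_B_far_c //; nat_lia.
Qed.

Lemma nonadj_lower_nbrs_absurd : False.
Proof.
pose f n := if n <= k then A n else if n == k.+1 then c else B (k.*2.+2 - n).
apply: (bridgedP.1 hb k.*2.+2 f); first by nat_lia.
have hAc i : i <= k -> d (A i) c = k.+1 - i := dist_geodesic_apex hca A0 Ak gA.
have hBc j : j <= k -> d (B j) c = k.+1 - j := dist_geodesic_apex hcb B0 Bk gB.
apply: cycle_isometry_le => n1 n2 h12 hn2; rewrite /f /cycle_dist.
have [h2 | h2] := leqP n2 k; first by rewrite (leq_trans h12 h2) gA; nat_lia.
have [h1 | h1] := leqP n1 k.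
  have [-> | h3] := eqVneq n2 k.+1; first by rewrite hAc; nat_lia.
  by rewrite dist_A_B_c; nat_lia.
have [-> | h3] := eqVneq n1 k.+1.
  have [-> | h4] := eqVneq n2 k.+1; first by rewrite distxx; nat_lia.
  by rewrite distC hBc; nat_lia.
have [h4 | h4] := eqVneq n2 k.+1; first by nat_lia.
by rewrite gB; nat_lia.
Qed.

End Cycle.
End LowerCliqueBridged.

Lemma lower_clique_bridged k : (forall j, j <= k -> triangle_cond j) ->
  (forall j, j < k -> lower_clique j) -> lower_clique k.
Proof.
have [-> _ _ | k_gt0 tc_le lc_lt] := posnP k; first exact: lower_clique0.
move=> u c a b huc hca hcb hua hub hab; apply/negPn/negP => hnab.
have [A [A0 Ak gA]] := exists_geodesic u a; rewrite hua in Ak gA.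
have [B [B0 Bk gB]] := exists_geodesic u b; rewrite hub in Bk gB.
exact: (nonadj_lower_nbrs_absurd k_gt0 tc_le lc_lt huc hca hcb hua hub hab hnab
          A0 Ak gA B0 Bk gB).
Qed.

Lemma triangle_lower_clique_of_bridged k : triangle_cond k /\ lower_clique k.
Proof.
elim/ltn_ind: k => k IH.
have tc_lt j : j < k -> triangle_cond j by case/IH.
have lc_lt j : j < k -> lower_clique j by case/IH.
have tc := triangle_cond_bridged tc_lt lc_lt.
split => //; apply: lower_clique_bridged lc_lt => j.
by rewrite leq_eqVlt => /predU1P [-> | /tc_lt].
Qed.

Lemma J0_of_bridged : cond_J0' (interval e).
Proof.
move=> u x y v huq; rewrite !in_interval => /eqP hx /eqP hy hsub.
have [hux hxy hyv] : [/\ u != x, x != y & y != v].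
  by move: huq; rewrite /= !inE !negb_or => /and4P [/and3P [-> _ _] /andP [-> _] -> _].
have in_set w : d u w + d w y = d u y -> d x w + d w v = d x v ->
    [\/ w = u, w = x, w = y | w = v].
  move=> h1 h2; have /subsetP /(_ w) := hsub.
  rewrite inE !in_interval h1 h2 !eqxx !inE -!orbA => /(_ isT) /or4P.
  by case=> /eqP ->; [exact: Or41 | exact: Or42 | exact: Or43 | exact: Or44].
have hxy1 := interval_meet_adjacent hxy hx hy in_set.
have [huv | huv] := leqP (d u x + d x v) (d u v); first by rewrite eqn_leq huv dist_triangle.
exfalso.
have fill : triangle_filling (d u x) (d v y).
  apply: (triangle_filling_le (s := d u x + d v y)) => // h _.
  - exact: (triangle_lower_clique_of_bridged h).1.
  - exact: (triangle_lower_clique_of_bridged h).2.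
have hy' : d u y = (d u x).+1 by rewrite -hx hxy1 addn1.
have hvx : d v x = (d v y).+1 by rewrite distC -hy hxy1 add1n distC.
have hle : d u v <= d u x + d v y by rewrite (distC v y); nat_lia.
have [w [hxw hyw huw hvw]] := fill u x y v (edge_dist1 hxy1) erefl hy' erefl hvx hle.
have w1 : d u w + d w y = d u y by rewrite huw (distC w y) (dist_edge hyw) hy' addn1.
have w2 : d x w + d w v = d x v by rewrite (dist_edge hxw) (distC w v) hvw -hy hxy1 (distC y v).
case: (in_set w w1 w2) => ew; subst w.
- by move: huw; rewrite distxx => /esym/dist0_eq ex; rewrite ex eqxx in hux.
- by rewrite e_irr in hxw.
- by rewrite e_irr in hyw.
- by move: hvw; rewrite distxx => /esym/dist0_eq ev; rewrite ev eqxx in hyv.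
Qed.

Lemma ball1_interval w u v z : d w u <= 1 -> d w v <= 1 -> d u z + d z v = d u v -> d w z <= 1.
Proof.
move=> hwu hwv huv.
have [/dist0_eq <- // | hu0] := posnP (d u z).
have [/dist0_eq -> // | hv0] := posnP (d z v).
have huv2 : d u v = 2 by have := dist_triangle u w v; rewrite (distC u w); nat_lia.
have hwu1 : d w u = 1.
  have [/dist0_eq hw | ?] := posnP (d w u); last by nat_lia.
  by move: hwv; rewrite hw huv2.
have hwv1 : d w v = 1.
  have [/dist0_eq hw | ?] := posnP (d w v); last by nat_lia.
  by move: hwu; rewrite hw distC huv2.
rewrite leqNgt; apply/negP => hwz.
have hwz2 : d w z = 1.+1 by have := dist_triangle w u z; nat_lia.
have hzu : e z u by rewrite e_sym; apply: edge_dist1; nat_lia.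
have hzv : e z v by apply: edge_dist1; nat_lia.
have [_ lc] := triangle_lower_clique_of_bridged 1.
by have := lower_clique_dist lc hwz2 hzu hzv hwu1 hwv1; nat_lia.
Qed.

Lemma br_path_bridged x y u v z : d x y = 1 -> d x u = 1 -> d v y = 1 ->
  d x v = 2 -> d u y = 2 -> d u z + d z v = d u v -> d x z <= 1 \/ d y z <= 1.
Proof.
move=> hxy hxu hvy hxv huy hz.
have [/dist0_eq <- | hu0] := posnP (d u z); first by left; rewrite hxu.
have [/dist0_eq -> | hv0] := posnP (d z v); first by right; rewrite distC hvy.
have [_ lc2] := triangle_lower_clique_of_bridged 2.
have hux : e u x by rewrite e_sym edge_dist1.
have hvy' : e v y by rewrite edge_dist1.
have huv3 : d u v <= 3 by have := dist_triangle u x v; rewrite (distC u x); nat_lia.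
have [huv | huv] := leqP (d u v) 2.
  have huz : e u z by apply: edge_dist1; nat_lia.
  have hzv : e z v by apply: edge_dist1; nat_lia.
  have [hxz | hxz] := leqP (d x z) 1; first by left.
  have [hyz | hyz] := leqP (d y z) 1; first by right.
  exfalso; apply: (no_isometric_pentagon hux (edge_dist1 hxy) (edge_sym hvy')
                     (edge_sym hzv) (edge_sym huz)).
  - by [].
  - by nat_lia.
  - by [].
  - by have := dist_triangle x u z; nat_lia.
  - by have := dist_triangle y v z; rewrite (distC y v) (distC v z); nat_lia.
have [huz | huz] := leqP (d u z) 1.
  left; apply: (lower_clique_dist lc2 (_ : d v u = 3) hux); rewrite ?(distC v) //; try nat_lia.
  by apply: edge_dist1; nat_lia.
right; apply: (lower_clique_dist lc2 (_ : d u v = 3) hvy'); try nat_lia.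
by rewrite e_sym; apply: edge_dist1; nat_lia.
Qed.

Lemma br_of_bridged : cond_br (interval e).
Proof.
move=> u v x y z /interval_pairP hxy /interval_pairP hxu /interval_pairP hvy.
rewrite in_interval => /eqP hz.
suff : d x z <= 1 \/ d y z <= 1 by case=> h; [left | right]; apply/interval_pairP.
have [hxv | hxv] := leqP (d x v) 1; first by left; apply: (ball1_interval hxu hxv hz).
have [hyu | hyu] := leqP (d y u) 1.
  by right; apply: (ball1_interval hyu _ hz); rewrite distC.
apply: br_path_bridged hz.
- have [/dist0_eq hx | ?] := posnP (d x y); last by nat_lia.
  by move: hxv; rewrite hx distC; nat_lia.
- have [/dist0_eq hx | ?] := posnP (d x u); last by nat_lia.
  by move: hyu; rewrite -hx distC; nat_lia.
- have [/dist0_eq hv | ?] := posnP (d v y); last by nat_lia.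
  by move: hxv; rewrite hv; nat_lia.
- by have := dist_triangle x y v; rewrite (distC y v); nat_lia.
- by have := dist_triangle y x u; rewrite (distC y x) (distC u y); nat_lia.
Qed.

End Bridged.

End Distances.

Theorem theorem7 (T : finType) (e : rel T) :
  symmetric e -> irreflexive e -> connected_graph e ->
  (cond_J0' (interval e) /\ cond_br (interval e) <-> bridged e).
Proof.
move=> e_sym e_irr e_conn; split; first by case; apply: bridged_of_axioms.
by move=> hb; split; [apply: J0_of_bridged | apply: br_of_bridged].
Qed.
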